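(* For any graph $\Gamma$, the polygraph monoid $P(\Gamma)=IH^0(M(\Gamma))$ is strongly $E^*$-unitary.
   Context: A graph $\Gamma=(V,E)$ has vertex set $V$ and irreflexive symmetric edge relation $E$. The graph monoid $M(\Gamma)$ is presented by $\langle x_v\ (v\in V)\mid x_ux_v=x_vx_u \text{ for } (u,v)\in E\rangle$. For a right cancellative monoid $D$ and $a\in D$, $\rho_a:D\to D$, $x\mapsto xa$, is a partial bijection of $D$; $IH(D)$ is the inverse submonoid of the symmetric inverse monoid on $D$ generated by all $\rho_a$, and $IH^0(D)=IH(D)\cup\{\emptyset\}$ with the empty map as zero. An inverse monoid $S$ with zero is strongly $E^*$-unitary if there is a group $G$ and a function $\theta:S\to G^0$ ($G$ with a zero adjoined) such that $a\theta=0$ iff $a=0$, $a\theta=1$ iff $a$ is a nonzero idempotent, and $(ab)\theta=(a\theta)(b\theta)$ whenever $ab\neq 0$. *)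

From Stdlib Require Import List Relations.
Import ListNotations.
Set Implicit Arguments.

Section GraphMonoid.
Variables (V : Type) (E : V -> V -> Prop).

Inductive gstep : list V -> list V -> Prop :=
| gswap (u w : list V) (a b : V) :
    E a b -> gstep (u ++ a :: b :: w) (u ++ b :: a :: w).

Definition gequiv : list V -> list V -> Prop := clos_refl_sym_trans _ gstep.

Definition GM : Type := { P : list V -> Prop | exists w, P = gequiv w }.

Definition rho (a : GM) : GM -> GM -> Prop :=
  fun x y => exists u v, proj1_sig x = gequiv u /\ proj1_sig a = gequiv v /\
                         proj1_sig y = gequiv (u ++ v).
End GraphMonoid.

(** * Partial maps on a type, as relations; composition is left to right:
      x (f g) = (x f) g. *)
Definition prel (X : Type) := X -> X -> Prop.
Definition pcomp X (f g : prel X) : prel X := fun x z => exists y, f x y /\ g y z.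
Definition pinv X (f : prel X) : prel X := fun x y => f y x.
Definition pid X : prel X := fun x y => x = y.
Definition pempty X (f : prel X) : Prop := forall x y, ~ f x y.
Definition pidem X (f : prel X) : Prop := forall x y, pcomp f f x y <-> f x y.

Inductive inIH (V : Type) (E : V -> V -> Prop) : prel (GM E) -> Prop :=
| ih_gen (a : GM E) : inIH (rho a)
| ih_id : inIH (@pid (GM E))
| ih_inv f : inIH f -> inIH (pinv f)
| ih_comp f g : inIH f -> inIH g -> inIH (pcomp f g).

Definition inIH0 (V : Type) (E : V -> V -> Prop) (f : prel (GM E)) : Prop :=
  @inIH V E f \/ pempty f.

Record group_str (G : Type) := {
  gmul : G -> G -> G;
  gone : G;
  ginv : G -> G;
  gmulA : forall x y z, gmul x (gmul y z) = gmul (gmul x y) z;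
  gmul1 : forall x, gmul gone x = x;
  gmulV : forall x, gmul (ginv x) x = gone
}.

(** multiplication in G^0 = G with a zero adjoined (None = 0) *)
Definition omul G (g : group_str G) (x y : option G) : option G :=
  match x, y with Some a, Some b => Some (gmul g a b) | _, _ => None end.

(** An inverse monoid with zero S (given as a set of partial maps on X,
    zero = empty map, product = composition) is strongly E*-unitary. *)
Definition strongly_Estar_unitary X (S : prel X -> Prop) : Prop :=
  exists (G : Type) (g : group_str G) (theta : prel X -> option G),
    (forall a, S a -> (theta a = None <-> pempty a)) /\
    (forall a, S a -> (theta a = Some (gone g) <-> (~ pempty a /\ pidem a))) /\
    (forall a b, S a -> S b -> ~ pempty (pcomp a b) ->
       theta (pcomp a b) = omul g (theta a) (theta b)).

From Stdlib Require Import List Relations Classical ClassicalEpsilon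
  FunctionalExtensionality ProofIrrelevance PropExtensionality.
Import ListNotations.
Set Implicit Arguments.

(* If a monoid D embeds into a group G by phi, every element f of IH(D) is a
   translation: x f = y implies phi y = phi x t for a fixed t in G.  Sending a
   nonzero f to its (unique) t, and 0 to 0, witnesses strong E*-unitarity;
   f is idempotent exactly when t = 1, by injectivity of phi.

   The graph monoid M(Gamma) embeds into a group: for every pair p, q of
   non-adjacent vertices (p = q allowed) let a letter c act on the free group
   over {p, q} by left multiplication if c is p or q and trivially otherwise.
   Commuting letters act by commuting permutations, and the action on the
   identity element reads off the projection of a word onto the alphabet
   {p, q}.  Two words with the same projections onto all such alphabets are
   equal in M(Gamma): the first letter a of one word occurs in the other word
   after a prefix of letters adjacent to a, so it can be commuted to the
   front. *)

Local Notation dec := excluded_middle_informative.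

Lemma nonempty_witness X (f : prel X) : ~ pempty f -> exists x y, f x y.
Proof.
  intro Hne. apply NNPP. intro Hno. apply Hne. intros x y Hxy. apply Hno. eauto.
Qed.

Lemma pcomp_nonempty X (f h : prel X) :
  ~ pempty (pcomp f h) -> ~ pempty f /\ ~ pempty h.
Proof.
  intro Hne. destruct (nonempty_witness Hne) as [x [z [y [Hxy Hyz]]]].
  split; intro He; [exact (He _ _ Hxy) | exact (He _ _ Hyz)].
Qed.

Section GroupFacts.
Variables (G : Type) (g : group_str G).
Local Infix "·" := (gmul g) (at level 40, left associativity).

Lemma gmulKV x y : ginv g x · (x · y) = y.
Proof. now rewrite gmulA, gmulV, gmul1. Qed.

Lemma gmul_cancel x y z : x · y = x · z -> y = z.
Proof. intro H. now rewrite <- (gmulKV x y), H, gmulKV. Qed.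

Lemma gmul_idem_one z : z · z = z -> z = gone g.
Proof. intro H. rewrite <- (gmulKV z z) at 1. now rewrite H, gmulV. Qed.

Lemma gmulVr x : x · ginv g x = gone g.
Proof. apply gmul_idem_one. now rewrite <- gmulA, gmulKV. Qed.

Lemma gmul1r x : x · gone g = x.
Proof. now rewrite <- (gmulV g x), gmulA, gmulVr, gmul1. Qed.

End GroupFacts.

Section Translations.
Variables (X G : Type) (g : group_str G) (phi : X -> G).
Local Infix "·" := (gmul g) (at level 40, left associativity).

Definition translates (f : prel X) (t : G) : Prop :=
  forall x y, f x y -> phi y = phi x · t.

Lemma translates_pid : translates (@pid X) (gone g).
Proof. intros x y Hxy. rewrite Hxy. symmetry. apply gmul1r. Qed.

Lemma translates_pinv f t : translates f t -> translates (pinv f) (ginv g t).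
Proof.
  intros Hf x y Hyx. now rewrite (Hf _ _ Hyx), <- gmulA, gmulVr, gmul1r.
Qed.

Lemma translates_pcomp f h s t :
  translates f s -> translates h t -> translates (pcomp f h) (s · t).
Proof.
  intros Hf Hh x z [y [Hxy Hyz]]. now rewrite (Hh _ _ Hyz), (Hf _ _ Hxy), gmulA.
Qed.

Lemma translates_unique f s t :
  ~ pempty f -> translates f s -> translates f t -> s = t.
Proof.
  intros Hne Hs Ht. destruct (nonempty_witness Hne) as [x [y Hxy]].
  apply (gmul_cancel g (phi x)). now rewrite <- (Hs _ _ Hxy), <- (Ht _ _ Hxy).
Qed.

Lemma translates_pidem_one f t :
  ~ pempty f -> translates f t -> pidem f -> t = gone g.
Proof.
  intros Hne Hf Hid. destruct (nonempty_witness Hne) as [x [y Hxy]].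
  destruct (proj2 (Hid x y) Hxy) as [z [Hxz Hzy]].
  apply (gmul_idem_one g), (gmul_cancel g (phi x)). transitivity (phi y).
  - now rewrite gmulA, <- (Hf _ _ Hxz), <- (Hf _ _ Hzy).
  - exact (Hf _ _ Hxy).
Qed.

Hypothesis phi_inj : forall x y, phi x = phi y -> x = y.

Lemma translates_one_eq f : translates f (gone g) -> forall x y, f x y -> x = y.
Proof. intros Hf x y Hxy. apply phi_inj. now rewrite (Hf _ _ Hxy), gmul1r. Qed.

Lemma translates_one_pidem f : translates f (gone g) -> pidem f.
Proof.
  intros Hf x y. split.
  - intros [z [Hxz Hzy]]. now rewrite (translates_one_eq Hf _ _ Hxz).
  - intro Hxy. exists x. split; [|exact Hxy].
    rewrite (translates_one_eq Hf _ _ Hxy) at 2. exact Hxy.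
Qed.

Definition theta (f : prel X) : option G :=
  if dec (pempty f) then None
  else Some (epsilon (inhabits (gone g)) (translates f)).

Lemma theta_translates f :
  ~ pempty f -> (exists t, translates f t) -> exists t, theta f = Some t /\ translates f t.
Proof.
  intros Hne Hex. unfold theta. destruct (dec (pempty f)) as [He|_]; [contradiction|].
  eexists. split; [reflexivity | exact (epsilon_spec _ _ Hex)].
Qed.

Theorem translations_strongly_Estar_unitary (S : prel X -> Prop) :
  (forall f, S f -> exists t, translates f t) -> strongly_Estar_unitary S.
Proof.
  intros HS. exists G, g, theta. split; [|split].
  - intros a _. unfold theta.
    destruct (dec (pempty a)); split; intro; easy.
  - intros a Sa. split.
    + intro Hone.
      assert (Hne : ~ pempty a).
      { intro He. unfold theta in Hone. destruct (dec (pempty a)); easy. }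
      destruct (theta_translates Hne (HS a Sa)) as [t [Ht Hat]].
      rewrite Hone in Ht. injection Ht as <-.
      split; [exact Hne | exact (translates_one_pidem Hat)].
    + intros [Hne Hid]. destruct (theta_translates Hne (HS a Sa)) as [t [-> Hat]].
      f_equal. exact (translates_pidem_one Hne Hat Hid).
  - intros a b Sa Sb Hne. destruct (pcomp_nonempty Hne) as [Hna Hnb].
    destruct (theta_translates Hna (HS a Sa)) as [s [-> Has]].
    destruct (theta_translates Hnb (HS b Sb)) as [t [-> Hbt]].
    destruct (theta_translates Hne (ex_intro _ _ (translates_pcomp Has Hbt)))
      as [st [-> Habst]].
    simpl. f_equal. exact (translates_unique Hne Habst (translates_pcomp Has Hbt)).
Qed.

End Translations.

Record perm (X : Type) := Perm {
  perm_fun : X -> X;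
  perm_inv : X -> X;
  perm_funK : forall x, perm_fun (perm_inv x) = x;
  perm_invK : forall x, perm_inv (perm_fun x) = x }.
Arguments Perm {X}.

Section PermGroup.
Variable X : Type.

Lemma perm_ext (p q : perm X) : (forall x, perm_fun p x = perm_fun q x) -> p = q.
Proof.
  destruct p as [f f' fK f'K], q as [h h' hK h'K]; simpl. intro Hfh.
  assert (f = h) by (apply functional_extensionality; exact Hfh). subst h.
  assert (f' = h').
  { apply functional_extensionality. intro x. now rewrite <- (hK x) at 1 ; rewrite f'K. }
  subst h'. f_equal; apply proof_irrelevance.
Qed.

Definition perm_comp (p q : perm X) : perm X.
Proof.
  refine (Perm (fun x => perm_fun p (perm_fun q x)) (fun x => perm_inv q (perm_inv p x)) _ _);
    intro x; now rewrite ?perm_funK, ?perm_invK.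
Defined.

Definition perm_one : perm X := Perm (fun x => x) (fun x => x) (@eq_refl X) (@eq_refl X).

Definition perm_invert (p : perm X) : perm X :=
  Perm (perm_inv p) (perm_fun p) (perm_invK p) (perm_funK p).

Definition perm_group : group_str (perm X).
Proof.
  refine (@Build_group_str (perm X) perm_comp perm_one perm_invert _ _ _);
    intros; apply perm_ext; intros; simpl; [reflexivity | reflexivity | apply perm_invK].
Defined.

End PermGroup.

Section FreeReduction.
Variable V : Type.

Fixpoint reduced (w : list (bool * V)) : Prop :=
  match w with
  | (s, c) :: (((s', c') :: _) as w') => ~ (c' = c /\ s' = negb s) /\ reduced w'
  | _ => True
  end.

(* Left multiplication of a reduced word by the letter c^(+1) (s = true) or c^(-1). *)
Definition push (s : bool) (c : V) (w : list (bool * V)) : list (bool * V) :=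
  match w with
  | (s', c') :: w' => if dec (c' = c /\ s' = negb s) then w' else (s, c) :: w
  | [] => [(s, c)]
  end.

Lemma reduced_push s c w : reduced w -> reduced (push s c w).
Proof.
  destruct w as [|[s' c'] w]; simpl; [trivial|].
  intro Hw. destruct (dec (c' = c /\ s' = negb s)).
  - destruct w as [|[s2 c2] w]; simpl in *; tauto.
  - simpl. tauto.
Qed.

Lemma push_negbK s c w : reduced w -> push (negb s) c (push s c w) = w.
Proof.
  assert (Hcancel : c = c /\ s = negb (negb s)) by (split; [reflexivity | now destruct s]).
  destruct w as [|[s' c'] w]; simpl.
  - intros _. now destruct (dec (c = c /\ s = negb (negb s))).
  - intro Hw. destruct (dec (c' = c /\ s' = negb s)) as [[-> ->]|Hne].
    + destruct w as [|[s2 c2] w]; simpl; [reflexivity|].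
      destruct (dec (c2 = c /\ s2 = negb (negb s))); simpl in Hw; tauto.
    + simpl. now destruct (dec (c = c /\ s = negb (negb s))).
Qed.

Lemma reduced_positive (u : list V) : reduced (map (pair true) u).
Proof.
  induction u as [|a [|b u] IH]; simpl in *; try trivial.
  split; [intros [_ H]; discriminate H | exact IH].
Qed.

Lemma push_positive c u : push true c (map (pair true) u) = (true, c) :: map (pair true) u.
Proof.
  destruct u as [|b u]; simpl; [reflexivity|].
  now destruct (dec (b = c /\ true = false)) as [[_ H]|_].
Qed.

End FreeReduction.

Lemma split_first_occurrence (V : Type) (a : V) w :
  In a w -> exists w1 w2, w = w1 ++ a :: w2 /\ ~ In a w1.
Proof.
  induction w as [|x w IH]; simpl; [tauto|].
  intro Ha. destruct (classic (x = a)) as [->|Hxa].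
  - now exists [], w.
  - destruct Ha as [Ha|Ha]; [contradiction|].
    destruct (IH Ha) as [w1 [w2 [-> Hw1]]].
    exists (x :: w1), w2. split; [reflexivity|]. simpl. tauto.
Qed.

Section Projection.
Variables (V : Type) (p q : V).

Definition project (u : list V) : list V :=
  filter (fun c => if dec (c = p \/ c = q) then true else false) u.

Lemma project_cons a u :
  project (a :: u) = if dec (a = p \/ a = q) then a :: project u else project u.
Proof. unfold project; simpl. now destruct (dec (a = p \/ a = q)). Qed.

Lemma project_app u w : project (u ++ w) = project u ++ project w.
Proof. apply filter_app. Qed.

Lemma in_project x u : In x (project u) <-> In x u /\ (x = p \/ x = q).
Proof. unfold project. rewrite filter_In. destruct (dec (x = p \/ x = q)); intuition discriminate. Qed.

Lemma project_nil u : (forall c, In c u -> ~ (c = p \/ c = q)) -> project u = [].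
Proof.
  induction u as [|a u IH]; intro Hu; [reflexivity|].
  rewrite project_cons. destruct (dec (a = p \/ a = q)) as [Ha|_].
  - exfalso. exact (Hu a (or_introl eq_refl) Ha).
  - apply IH. intros c Hc. apply Hu. now right.
Qed.

End Projection.

Section GraphMonoidEmbedding.
Variables (V : Type) (E : V -> V -> Prop).
Hypothesis Esym : forall u v, E u v -> E v u.
Hypothesis Eirr : forall v, ~ E v v.

Lemma gequiv_cons a u w : gequiv E u w -> gequiv E (a :: u) (a :: w).
Proof.
  induction 1 as [u w [u' w' b c Hbc]| | |]; try (econstructor; eauto; fail).
  apply rst_step. exact (gswap E (a :: u') w' _ _ Hbc).
Qed.

Lemma gequiv_commute_front a w1 w2 :
  (forall c, In c w1 -> E a c) -> gequiv E (w1 ++ a :: w2) (a :: w1 ++ w2).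
Proof.
  induction w1 as [|c w1 IH]; intro Hw1; simpl; [apply rst_refl|].
  eapply rst_trans.
  - apply gequiv_cons, IH. intros d Hd. apply Hw1. now right.
  - apply rst_step. exact (gswap E [] (w1 ++ w2) _ _ (Esym (Hw1 c (or_introl eq_refl)))).
Qed.

Definition same_projections (u w : list V) : Prop :=
  forall p q, ~ E p q -> project p q u = project p q w.

(* Projecting onto {a, a} and onto {a, c}, for c non-adjacent to a, shows that
   a occurs in w and that the letters of w before its first a are adjacent to a. *)
Lemma same_projections_head a u w : same_projections (a :: u) w ->
  exists w1 w2, w = w1 ++ a :: w2 /\ ~ In a w1 /\ (forall c, In c w1 -> E a c).
Proof.
  intro Hp.
  assert (Ha : In a (project a a w)).
  { rewrite <- (Hp a a (@Eirr a)), project_cons.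
    destruct (dec (a = a \/ a = a)) as [_|Hn]; [now left | tauto]. }
  apply in_project in Ha. destruct Ha as [Ha _].
  destruct (split_first_occurrence _ _ Ha) as [w1 [w2 [-> Hw1]]].
  exists w1, w2. repeat split; [exact Hw1|].
  intros c Hc. apply NNPP. intro Hac.
  specialize (Hp a c Hac). rewrite project_cons, project_app, project_cons in Hp.
  destruct (dec (a = a \/ a = c)) as [_|Hn]; [|tauto].
  destruct (project a c w1) as [|b t] eqn:Hw1p.
  - assert (Hcp : In c (project a c w1)) by (apply in_project; auto).
    now rewrite Hw1p in Hcp.
  - injection Hp as Hab _. subst b.
    apply Hw1, (in_project a c a w1). rewrite Hw1p. now left.
Qed.

Lemma same_projections_tail a u w1 w2 :
  ~ In a w1 -> (forall c, In c w1 -> E a c) ->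
  same_projections (a :: u) (w1 ++ a :: w2) -> same_projections u (w1 ++ w2).
Proof.
  intros Hw1 Hadj Hp p q Hpq. specialize (Hp p q Hpq).
  rewrite project_app, !project_cons in Hp. rewrite project_app.
  destruct (dec (a = p \/ a = q)) as [Ha|_]; [|exact Hp].
  assert (Hnil : project p q w1 = []).
  { apply project_nil. intros c Hc Hcpq. apply Hpq.
    destruct Ha as [-> | ->], Hcpq as [-> | ->];
      first [contradiction | exact (Hadj _ Hc) | exact (Esym (Hadj _ Hc))]. }
  rewrite Hnil in *. simpl in Hp. now injection Hp.
Qed.

Lemma same_projections_gequiv u : forall w, same_projections u w -> gequiv E u w.
Proof.
  induction u as [|a u IH]; intros w Hp.
  - destruct w as [|c w]; [apply rst_refl|].
    exfalso. specialize (Hp c c (@Eirr c)). rewrite project_cons in Hp.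
    destruct (dec (c = c \/ c = c)); [discriminate Hp | tauto].
  - destruct (same_projections_head Hp) as [w1 [w2 [-> [Hw1 Hadj]]]].
    eapply rst_trans; [| apply rst_sym, gequiv_commute_front, Hadj].
    apply gequiv_cons, IH. exact (same_projections_tail _ _ Hw1 Hadj Hp).
Qed.

(* A state (p, q, w): w is an element of the free group over {p, q}. *)
Definition state : Type := (V * V * { w : list (bool * V) | reduced w })%type.

Definition act (s : bool) (c : V) (o : state) : state :=
  match o with
  | (p, q, w) =>
    (p, q, if dec (~ E p q /\ (c = p \/ c = q))
           then exist _ (push s c (proj1_sig w)) (reduced_push s c _ (proj2_sig w))
           else w)
  end.

Lemma act_negbK s c o : act (negb s) c (act s c o) = o.
Proof.
  destruct o as [[p q] [w Hw]]; unfold act.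
  destruct (dec (~ E p q /\ (c = p \/ c = q))); [|reflexivity].
  f_equal. apply eq_sig_hprop; [intros; apply proof_irrelevance|].
  exact (push_negbK s c _ Hw).
Qed.

Definition letter (c : V) : perm state :=
  Perm (act true c) (act false c) (act_negbK false c) (act_negbK true c).

Definition word_perm (u : list V) : perm state :=
  fold_right (fun c acc => perm_comp (letter c) acc) (perm_one _) u.

Lemma word_perm_app u w : word_perm (u ++ w) = perm_comp (word_perm u) (word_perm w).
Proof.
  induction u as [|a u IH]; simpl; [|rewrite IH]; now apply perm_ext.
Qed.

Lemma act_commute a b o : E a b -> act true a (act true b o) = act true b (act true a o).
Proof.
  intro Hab. destruct o as [[p q] w]; unfold act.
  destruct (dec (~ E p q /\ (b = p \/ b = q))) as [[Hpq Hb]|];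
  destruct (dec (~ E p q /\ (a = p \/ a = q))) as [[_ Ha]|]; try reflexivity.
  exfalso. destruct Hb as [-> | ->], Ha as [-> | ->];
    first [exact (Eirr Hab) | exact (Hpq Hab) | exact (Hpq (Esym Hab))].
Qed.

Lemma word_perm_gequiv u w : gequiv E u w -> word_perm u = word_perm w.
Proof.
  induction 1 as [u w [u' w' a b Hab]| | |]; try congruence.
  rewrite !word_perm_app. f_equal. apply perm_ext. intro o. exact (act_commute _ Hab).
Qed.

Lemma word_perm_origin p q u : ~ E p q ->
  perm_fun (word_perm u) (p, q, exist _ [] I) =
  (p, q, exist _ (map (pair true) (project p q u)) (reduced_positive (project p q u))).
Proof.
  intro Hpq. induction u as [|c u IH].
  - simpl. f_equal. now apply eq_sig_hprop; [intros; apply proof_irrelevance|].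
  - rewrite project_cons. simpl. rewrite IH. unfold act.
    destruct (dec (c = p \/ c = q)) as [Hc|Hc];
    destruct (dec (~ E p q /\ (c = p \/ c = q))); try tauto;
    f_equal; apply eq_sig_hprop; try (intros; apply proof_irrelevance);
    simpl; first [apply push_positive | reflexivity].
Qed.

Lemma word_perm_same_projections u w :
  word_perm u = word_perm w -> same_projections u w.
Proof.
  intros Huw p q Hpq.
  assert (Ho := f_equal (fun f => perm_fun f (p, q, exist (@reduced V) [] I)) Huw).
  simpl in Ho. rewrite !word_perm_origin in Ho by exact Hpq.
  apply (f_equal (fun o => map snd (proj1_sig (snd o)))) in Ho. simpl in Ho.
  now rewrite !map_map, !map_id in Ho.
Qed.

Definition rep (x : GM E) : list V :=
  proj1_sig (constructive_indefinite_description _ (proj2_sig x)).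

Lemma rep_spec (x : GM E) : proj1_sig x = gequiv E (rep x).
Proof. unfold rep. now destruct constructive_indefinite_description. Qed.

Definition embed (x : GM E) : perm state := word_perm (rep x).

Lemma embed_class (x : GM E) u : proj1_sig x = gequiv E u -> embed x = word_perm u.
Proof.
  intro Hx. apply word_perm_gequiv. rewrite <- rep_spec, Hx. apply rst_refl.
Qed.

Lemma embed_inj (x y : GM E) : embed x = embed y -> x = y.
Proof.
  intro Hxy. apply word_perm_same_projections, same_projections_gequiv in Hxy.
  apply eq_sig_hprop; [intros; apply proof_irrelevance|]. rewrite !rep_spec.
  apply functional_extensionality. intro z. apply propositional_extensionality.
  split; intro Hz; eapply rst_trans; eauto using rst_sym.
Qed.

Lemma IH_translates f : inIH f -> exists t, translates (perm_group state) embed f t.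
Proof.
  induction 1 as [a| |f _ [t Ht]|f h _ [s Hs] _ [t Ht]].
  - exists (embed a). intros x y [u [v [Hx [Ha Hy]]]].
    now rewrite (embed_class _ Hx), (embed_class _ Ha), (embed_class _ Hy), word_perm_app.
  - exists (gone (perm_group state)). apply translates_pid.
  - exists (ginv (perm_group state) t). now apply translates_pinv.
  - exists (gmul (perm_group state) s t). now apply translates_pcomp.
Qed.

Lemma IH0_translates f : inIH0 f -> exists t, translates (perm_group state) embed f t.
Proof.
  intros [Hf|He]; [exact (IH_translates Hf)|].
  exists (perm_one _). intros x y Hxy. contradiction (He x y Hxy).
Qed.

End GraphMonoidEmbedding.

Theorem corollary3p4 (V : Type) (E : V -> V -> Prop)
  (Esym : forall u v, E u v -> E v u) (Eirr : forall v, ~ E v v) :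
  strongly_Estar_unitary (@inIH0 V E).
Proof.
  apply (translations_strongly_Estar_unitary (g := perm_group (state V)) (embed_inj Esym Eirr)).
  exact (IH0_translates Esym Eirr).
Qed.
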